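(* Let $m\ge 0$ and $n \ge 2m$ be integers. Then for every real $r$ with $|r|>1$, $$\int_{-1}^1 \frac{T_n(s)(1-s^2)^{m-\frac{1}{2}}}{s-r}\,ds = \pi(-1)^{m+1}\frac{|r|}{r}(r^2-1)^{m-\frac{1}{2}}\left(r-\frac{|r|}{r}\sqrt{r^2-1}\right)^n.$$
   Context: $T_k(s)=\cos(k\cos^{-1}s)$ is the Tchebyshev polynomial of the first kind. Since $|r|>1$, the integrand has no singularity in the interior of $(-1,1)$ and the integral is an ordinary (improper at $\pm1$ when $m=0$) integral. *)

From Stdlib Require Import Reals Lra.
From Coquelicot Require Import Coquelicot.
Open Scope R_scope.

(* Chebyshev polynomial of the first kind, T_k(s) = cos(k arccos s), for s in [-1,1]. *)
Definition chebT (k : nat) (s : R) : R := cos (INR k * acos s).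

Definition integrand (n m : nat) (r s : R) : R :=
  chebT n s * Rpower (1 - s ^ 2) (INR m - / 2) / (s - r).

From Stdlib Require Import Reals Lra Lia.
From Coquelicot Require Import Coquelicot.
Open Scope R_scope.

(* Substituting s = cos t turns the integral into
   K(m, n) = int_0^PI cos (n t) sin^(2m) t / (cos t - r) dt.
   Write r = (rho + 1/rho) / 2 with 0 < |rho| < 1.  The Poisson kernel gives
   K(0, 0) = -2 PI rho / (1 - rho^2); the identity
   cos ((k+2) t) + cos (k t) = 2 cos t cos ((k+1) t) gives K(0, k) = K(0, 0) rho^k; and
   sin^2 t = (1 - cos 2t) / 2 expresses K(m+1, n) through K(m, n-2), K(m, n), K(m, n+2),
   so that K(m, n) = K(0, 0) (1 - r^2)^m rho^n whenever n >= 2m. *)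

Lemma filterlim_acos_at_left_1 : filterlim acos (at_left 1) (locally 0).
Proof.
  intros P [eps HP].
  set (e := Rmin eps PI).
  assert (He : 0 < e) by (apply Rmin_glb_lt; [apply cond_pos | apply PI_RGT_0]).
  assert (Heeps : e <= eps) by apply Rmin_l.
  assert (HePI : e <= PI) by apply Rmin_r.
  assert (Hcos_e : cos e < 1) by (rewrite <- cos_0; apply cos_decreasing_1; lra).
  assert (Hdelta : 0 < 1 - cos e) by lra.
  exists (mkposreal _ Hdelta); intros y Hy Hy1; apply HP.
  change (Rabs (y - 1) < 1 - cos e) in Hy; apply Rabs_lt_between in Hy.
  pose proof (COS_bound e); pose proof (acos_bound y).
  assert (Hlt : acos y < e).
  { apply (cos_decreasing_0 e); try lra. rewrite cos_acos; [lra | split; lra]. }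
  change (Rabs (acos y - 0) < eps); apply Rabs_lt_between; split; lra.
Qed.

Lemma filterlim_acos_at_right_m1 : filterlim acos (at_right (-1)) (locally PI).
Proof.
  apply (filterlim_ext (fun y => PI - acos (- y))).
  { intros y; rewrite acos_opp; ring. }
  apply (filterlim_comp _ _ _ (fun y => acos (- y)) (Rminus PI) _ (locally 0)).
  - apply (filterlim_comp _ _ _ Ropp acos _ (at_left 1)).
    + replace 1 with (- -1) by ring. apply filterlim_Ropp_right.
    + exact filterlim_acos_at_left_1.
  - replace PI with (PI - 0) at 2 by ring.
    apply (continuous_minus (fun _ => PI) (fun x => x));
      [apply continuous_const | apply continuous_id].
Qed.

Lemma filter_prod_at_right_at_left_inside (a b : R) : a < b ->
  filter_prod (at_right a) (at_left b)
    (fun ab => forall x, Rmin (fst ab) (snd ab) <= x <= Rmax (fst ab) (snd ab) -> a < x < b).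
Proof.
  intros Hab.
  assert (Hd : 0 < b - a) by lra.
  apply (Filter_prod _ _ _ (fun x => a < x < b) (fun x => a < x < b)).
  - exists (mkposreal _ Hd); intros y Hy Hay; simpl in *.
    change (Rabs (y - a) < b - a) in Hy; apply Rabs_lt_between in Hy; lra.
  - exists (mkposreal _ Hd); intros y Hy Hyb; simpl in *.
    change (Rabs (y - b) < b - a) in Hy; apply Rabs_lt_between in Hy; lra.
  - intros x y Hx Hy z; simpl; unfold Rmin, Rmax; destruct (Rle_dec x y); lra.
Qed.

Lemma is_derive_acos (x : R) : -1 < x < 1 -> is_derive acos x (-1 / sqrt (1 - x ^ 2)).
Proof.
  intros Hx; rewrite <- Rsqr_pow2; apply is_derive_Reals.
  exact (derive_pt_eq_1 _ _ _ (derivable_pt_acos x Hx) (derive_pt_acos x Hx)).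
Qed.

Lemma locally_open_interval (a b x : R) : a < x < b -> locally x (fun y => a < y < b).
Proof. intros Hx; apply (locally_interval _ x a b); simpl; tauto. Qed.

Lemma is_derive_RInt_0 (h : R -> R) (x : R) : (forall t, continuous h t) ->
  is_derive (fun y => RInt h 0 y) x (h x).
Proof.
  intros Hh; apply (is_derive_RInt (V := R_CompleteNormedModule) h _ 0); [|apply Hh].
  apply filter_forall; intros y; apply (RInt_correct (V := R_CompleteNormedModule)).
  apply ex_RInt_continuous; intros z _; apply Hh.
Qed.

Lemma is_RInt_gen_acos (h : R -> R) : (forall t, continuous h t) ->
  is_RInt_gen (fun s => h (acos s) / sqrt (1 - s ^ 2)) (at_right (-1)) (at_left 1)
    (RInt h 0 PI).
Proof.
  intros Hh.
  set (f := fun s => h (acos s) / sqrt (1 - s ^ 2)).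
  set (H := fun x => RInt h 0 x).
  set (G := fun s => - H (acos s)).
  assert (HH : forall x, is_derive H x (h x)) by (intros x; now apply is_derive_RInt_0).
  assert (HG : forall s, -1 < s < 1 -> is_derive G s (f s)).
  { intros s Hs.
    assert (Hsq : 0 < sqrt (1 - s ^ 2)) by (apply sqrt_lt_R0; nra).
    evar (df : R); replace (f s) with df; unfold df.
    - apply (is_derive_opp (fun s => H (acos s))).
      apply (is_derive_comp H acos); [apply HH | now apply is_derive_acos].
    - change (- (-1 / sqrt (1 - s ^ 2) * h (acos s)) = f s); unfold f; field; lra. }
  assert (Hf : forall s, -1 < s < 1 -> continuous f s).
  { intros s Hs; unfold f, Rdiv.
    apply (continuous_mult (K := R_AbsRing) (fun s => h (acos s))).
    - apply (continuous_comp acos h); [|exact (Hh (acos s))].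
      apply (ex_derive_continuous (V := R_NormedModule)); eexists; now apply is_derive_acos.
    - apply (ex_derive_continuous (V := R_NormedModule)); auto_derive.
      repeat split; [nra | apply Rgt_not_eq, sqrt_lt_R0; nra]. }
  assert (HDG : forall s, -1 < s < 1 -> Derive G s = f s).
  { intros s Hs; apply is_derive_unique, HG, Hs. }
  assert (HcontDG : forall s, -1 < s < 1 -> continuous (Derive G) s).
  { intros s Hs; apply (continuous_ext_loc _ f); [|now apply Hf].
    apply (filter_imp (fun y => -1 < y < 1)); [|now apply locally_open_interval].
    intros y Hy; symmetry; now apply HDG. }
  assert (HcontH : forall t, continuous (fun t => - H t) t).
  { intros t; apply (ex_derive_continuous (V := R_NormedModule)); eexists.
    apply (is_derive_opp H), HH. }
  replace (H PI) with (- H 0 - - H PI)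
    by (unfold H; rewrite (RInt_point 0 h); change (zero : R) with 0; ring).
  assert (Hin := filter_prod_at_right_at_left_inside (-1) 1 ltac:(lra)).
  apply (is_RInt_gen_ext (Derive G)).
  { revert Hin; apply filter_imp; intros ab Hab x Hx; apply HDG, Hab; lra. }
  apply is_RInt_gen_Derive.
  - revert Hin; apply filter_imp; intros ab Hab x Hx; eexists; now apply HG, Hab.
  - revert Hin; apply filter_imp; intros ab Hab x Hx; now apply HcontDG, Hab.
  - apply (filterlim_comp _ _ _ acos (fun t => - H t) _ (locally PI));
      [apply filterlim_acos_at_right_m1 | apply HcontH].
  - apply (filterlim_comp _ _ _ acos (fun t => - H t) _ (locally 0));
      [apply filterlim_acos_at_left_1 | apply HcontH].
Qed.

Lemma RInt_lincomb2 (f g : R -> R) (a b al be : R) :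
  ex_RInt f a b -> ex_RInt g a b ->
  RInt (fun x => al * f x + be * g x) a b = al * RInt f a b + be * RInt g a b.
Proof.
  intros Hf Hg; apply is_RInt_unique.
  apply (is_RInt_plus (fun x => al * f x) (fun x => be * g x));
    apply (is_RInt_scal (V := R_NormedModule)), (RInt_correct (V := R_CompleteNormedModule));
    assumption.
Qed.

Lemma RInt_lincomb3 (f g h : R -> R) (a b al be ga : R) :
  ex_RInt f a b -> ex_RInt g a b -> ex_RInt h a b ->
  RInt (fun x => al * f x + be * g x + ga * h x) a b
  = al * RInt f a b + be * RInt g a b + ga * RInt h a b.
Proof.
  intros Hf Hg Hh; apply is_RInt_unique.
  apply (is_RInt_plus (fun x => al * f x + be * g x) (fun x => ga * h x));
    [apply (is_RInt_plus (fun x => al * f x) (fun x => be * g x)) |];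
    apply (is_RInt_scal (V := R_NormedModule)), (RInt_correct (V := R_CompleteNormedModule));
    assumption.
Qed.

Lemma RInt_cos_mult_0_PI (k : nat) : (1 <= k)%nat -> RInt (fun t => cos (INR k * t)) 0 PI = 0.
Proof.
  intros Hk.
  assert (Hk0 : INR k <> 0) by (apply not_0_INR; lia).
  apply is_RInt_unique.
  set (F := fun t => sin (INR k * t) / INR k).
  assert (HF : F PI - F 0 = 0).
  { unfold F; rewrite Rmult_0_r, sin_0, (sin_eq_0_1 (INR k * PI)); [field; exact Hk0|].
    exists (Z.of_nat k); now rewrite <- INR_IZR_INZ. }
  assert (HI : is_RInt (fun t => cos (INR k * t)) 0 PI (minus (F PI) (F 0))).
  { apply (is_RInt_derive (V := R_CompleteNormedModule) F).
    - intros t _; unfold F; auto_derive; [exact I | field; exact Hk0].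
    - intros t _; apply (ex_derive_continuous (V := R_NormedModule)); auto_derive; exact I. }
  change (minus (F PI) (F 0)) with (F PI - F 0) in HI; rewrite HF in HI; exact HI.
Qed.

Section TrigIntegral.

Variable r : R.
Hypothesis Hr : 1 < Rabs r.

Definition trig_integrand (m n : nat) (t : R) : R :=
  cos (INR n * t) * sin t ^ (2 * m) / (cos t - r).

Definition trig_integral (m n : nat) : R := RInt (trig_integrand m n) 0 PI.

Lemma cos_sub_neq0 (t : R) : cos t - r <> 0.
Proof. pose proof (COS_bound t); unfold Rabs in Hr; destruct (Rcase_abs r); lra. Qed.

Lemma ex_derive_trig_integrand (m n : nat) (t : R) : ex_derive (trig_integrand m n) t.
Proof. unfold trig_integrand; auto_derive; apply cos_sub_neq0. Qed.

Lemma continuous_trig_integrand (m n : nat) (t : R) : continuous (trig_integrand m n) t.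
Proof. apply (ex_derive_continuous (V := R_NormedModule)), ex_derive_trig_integrand. Qed.

Lemma ex_RInt_trig_integrand (m n : nat) (a b : R) : ex_RInt (trig_integrand m n) a b.
Proof.
  apply (ex_RInt_continuous (V := R_CompleteNormedModule)); intros t _.
  apply continuous_trig_integrand.
Qed.

Lemma trig_integral_0_1 : trig_integral 0 1 = PI + r * trig_integral 0 0.
Proof.
  unfold trig_integral.
  rewrite (RInt_ext _ (fun t => 1 * 1 + r * trig_integrand 0 0 t)).
  - rewrite (RInt_lincomb2 (fun _ => 1)), RInt_const by
      (apply ex_RInt_const || apply ex_RInt_trig_integrand).
    change (1 * ((PI - 0) * 1) + r * RInt (trig_integrand 0 0) 0 PI
            = PI + r * RInt (trig_integrand 0 0) 0 PI); ring.
  - intros t _; pose proof (cos_sub_neq0 t); unfold trig_integrand; simpl.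
    rewrite Rmult_1_l, Rmult_0_l, cos_0; field; assumption.
Qed.

Lemma trig_integral_0_SS (k : nat) :
  trig_integral 0 (k + 2) = 2 * r * trig_integral 0 (k + 1) - trig_integral 0 k.
Proof.
  unfold trig_integral.
  rewrite (RInt_ext _ (fun t => 2 * cos (INR (k + 1) * t) + 2 * r * trig_integrand 0 (k + 1) t
                                + (-1) * trig_integrand 0 k t)).
  - assert (Hcos : ex_RInt (fun t => cos (INR (k + 1) * t)) 0 PI).
    { apply (ex_RInt_continuous (V := R_CompleteNormedModule)); intros t _.
      apply continuous_cos_comp, (continuous_scal_r (K := R_AbsRing) (V := R_NormedModule)).
      apply continuous_id. }
    rewrite (RInt_lincomb3 _ (trig_integrand 0 (k + 1)) (trig_integrand 0 k) 0 PI 2 (2 * r) (-1))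
      by (exact Hcos || apply ex_RInt_trig_integrand).
    rewrite RInt_cos_mult_0_PI by lia.
    ring.
  - intros t _; pose proof (cos_sub_neq0 t); unfold trig_integrand.
    replace (INR (k + 2) * t) with (INR (k + 1) * t + t) by (rewrite !plus_INR; simpl; ring).
    replace (INR k * t) with (INR (k + 1) * t - t) by (rewrite !plus_INR; simpl; ring).
    rewrite cos_plus, cos_minus; simpl; field; assumption.
Qed.

Lemma trig_integral_S_SS (m k : nat) :
  trig_integral (S m) (k + 2)
  = / 2 * trig_integral m (k + 2) - / 4 * trig_integral m (k + 4) - / 4 * trig_integral m k.
Proof.
  unfold trig_integral.
  rewrite (RInt_ext _ (fun t => / 2 * trig_integrand m (k + 2) t
                                + (- / 4) * trig_integrand m (k + 4) t
                                + (- / 4) * trig_integrand m k t)).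
  - rewrite (RInt_lincomb3 (trig_integrand m (k + 2)) (trig_integrand m (k + 4))
               (trig_integrand m k)) by apply ex_RInt_trig_integrand.
    ring.
  - intros t _; pose proof (cos_sub_neq0 t); unfold trig_integrand.
    replace (INR (k + 4) * t) with (INR (k + 2) * t + 2 * t) by (rewrite !plus_INR; simpl; ring).
    replace (INR k * t) with (INR (k + 2) * t - 2 * t) by (rewrite !plus_INR; simpl; ring).
    replace (2 * S m)%nat with (2 * m + 2)%nat by lia.
    rewrite cos_plus, cos_minus, pow_add, cos_2a_sin, sin_2a.
    simpl; field; assumption.
Qed.

Variable rho : R.
Hypothesis Hrho : -1 < rho < 1.
Hypothesis Hrho0 : rho <> 0.
Hypothesis Hr_rho : r = (rho * rho + 1) / (2 * rho).

(* [(1 - rho^2) / (1 - 2 rho cos t + rho^2)] is the Poisson kernel, whose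
   antiderivative is [t + 2 atan (rho sin t / (1 - rho cos t))]. *)
Lemma trig_integral_0_0 : trig_integral 0 0 = -2 * rho * PI / (1 - rho * rho).
Proof.
  assert (Hden : forall t, 0 < 1 - rho * cos t).
  { intros t; pose proof (COS_bound t); destruct (Rle_dec 0 rho); nra. }
  set (F := fun t => -2 * rho / (1 - rho * rho) * (t + 2 * atan (rho * sin t / (1 - rho * cos t)))).
  assert (HF : F PI - F 0 = -2 * rho * PI / (1 - rho * rho)).
  { unfold F; rewrite sin_PI, sin_0, Rmult_0_r, !Rdiv_0_l, atan_0; field; nra. }
  assert (HI : is_RInt (trig_integrand 0 0) 0 PI (minus (F PI) (F 0))).
  { apply (is_RInt_derive (V := R_CompleteNormedModule) F);
      [|intros; apply continuous_trig_integrand].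
    intros t _; specialize (Hden t); pose proof (cos_sub_neq0 t) as Hcr;
    pose proof (sin2_cos2 t) as Hpyth.
    unfold F, trig_integrand; auto_derive; [lra|].
    simpl; rewrite Rmult_0_l, cos_0; rewrite Hr_rho in Hcr |- *; unfold Rsqr in *.
    assert (Hq : 2 * rho * cos t - rho * rho - 1 <> 0).
    { intros E; apply Hcr.
      replace (cos t - _) with ((2 * rho * cos t - rho * rho - 1) / (2 * rho))
        by (field; exact Hrho0).
      rewrite E; field; exact Hrho0. }
    set (c := cos t) in *; set (s := sin t) in *; clearbody c s.
    field_simplify_eq.
    - replace (s ^ 2) with (1 - c ^ 2) by (rewrite <- Hpyth; ring); ring.
    - repeat split; [exact Hrho0 | intros E; apply Hq; lra | lra | nra | nra]. }
  change (minus (F PI) (F 0)) with (F PI - F 0) in HI; rewrite HF in HI.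
  now apply is_RInt_unique.
Qed.

Lemma trig_integral_0 (n : nat) : trig_integral 0 n = trig_integral 0 0 * rho ^ n.
Proof.
  assert (Hpair : forall k, trig_integral 0 k = trig_integral 0 0 * rho ^ k
                      /\ trig_integral 0 (k + 1) = trig_integral 0 0 * rho ^ (k + 1)).
  { induction k as [|k [IH0 IH1]].
    - split; [ring|].
      change (0 + 1)%nat with 1%nat.
      rewrite trig_integral_0_1, trig_integral_0_0, Hr_rho; field.
      split; [apply Rgt_not_eq; nra | exact Hrho0].
    - replace (S k) with (k + 1)%nat by lia; split; [exact IH1|].
      replace (k + 1 + 1)%nat with (k + 2)%nat by lia.
      rewrite trig_integral_0_SS, IH0, IH1, !(pow_add rho k), Hr_rho; field; exact Hrho0. }
  exact (proj1 (Hpair n)).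
Qed.

Lemma trig_integral_closed_form (m n : nat) : (2 * m <= n)%nat ->
  trig_integral m n = trig_integral 0 0 * (1 - r * r) ^ m * rho ^ n.
Proof.
  revert n; induction m as [|m IH]; intros n Hmn.
  - rewrite trig_integral_0; ring.
  - destruct n as [|[|k]]; [lia | lia|].
    replace (S (S k)) with (k + 2)%nat by lia.
    rewrite trig_integral_S_SS, !IH by lia.
    rewrite <- tech_pow_Rmult, !(pow_add rho k), Hr_rho; field; exact Hrho0.
Qed.

End TrigIntegral.

Definition joukowski_inv (r : R) : R := r - Rabs r / r * sqrt (r ^ 2 - 1).

Lemma joukowski_inv_spec (r : R) : 1 < Rabs r ->
  -1 < joukowski_inv r < 1 /\ joukowski_inv r <> 0
  /\ r = (joukowski_inv r * joukowski_inv r + 1) / (2 * joukowski_inv r)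
  /\ Rabs r / r = 2 * sqrt (r ^ 2 - 1) * joukowski_inv r / (1 - joukowski_inv r * joukowski_inv r).
Proof.
  intros Hr; unfold joukowski_inv.
  assert (Hr2 : 0 < r ^ 2 - 1) by (unfold Rabs in Hr; destruct (Rcase_abs r); nra).
  assert (Hq : 0 < sqrt (r ^ 2 - 1)) by (apply sqrt_lt_R0; exact Hr2).
  pose proof (sqrt_sqrt (r ^ 2 - 1) (Rlt_le _ _ Hr2)) as Hqq.
  set (q := sqrt (r ^ 2 - 1)) in *; clearbody q.
  unfold Rabs in *; destruct (Rcase_abs r) as [Hneg | Hpos].
  - replace (- r / r) with (-1) by (field; lra).
    assert (q < - r) by nra; assert (- r - 1 < q) by nra.
    repeat split; try lra; field_simplify_eq; first [lra | apply Rgt_not_eq; nra | nra].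
  - replace (r / r) with 1 by (field; lra).
    assert (q < r) by nra; assert (r - 1 < q) by nra.
    repeat split; try lra; field_simplify_eq; first [lra | apply Rgt_not_eq; nra | nra].
Qed.

Lemma Rpower_INR_sub_half (x : R) (k : nat) : 0 < x -> Rpower x (INR k - / 2) = x ^ k / sqrt x.
Proof.
  intros Hx; unfold Rminus.
  rewrite Rpower_plus, Rpower_Ropp, Rpower_pow, Rpower_sqrt by exact Hx; reflexivity.
Qed.

Lemma trig_integrand_acos (r : R) (m n : nat) (s : R) : 1 < Rabs r -> -1 < s < 1 ->
  trig_integrand r m n (acos s) / sqrt (1 - s ^ 2) = integrand n m r s.
Proof.
  intros Hr Hs.
  assert (Hs2 : 0 < 1 - s ^ 2) by nra.
  assert (Hsq : 0 < sqrt (1 - s ^ 2)) by (apply sqrt_lt_R0; exact Hs2).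
  pose proof (cos_sub_neq0 r Hr (acos s)) as Hden; rewrite cos_acos in Hden by lra.
  unfold trig_integrand, integrand, chebT.
  rewrite cos_acos, sin_acos, Rsqr_pow2, Rpower_INR_sub_half, pow_mult by lra.
  replace (sqrt (1 - s ^ 2) ^ 2) with (1 - s ^ 2) by (symmetry; apply pow2_sqrt; lra).
  field; lra.
Qed.

Theorem mainTheorem9 (m n : nat) (hmn : (2 * m <= n)%nat) (r : R) (hr : 1 < Rabs r) :
  is_RInt_gen (integrand n m r) (at_right (-1)) (at_left 1)
    (PI * (-1) ^ (m + 1) * (Rabs r / r) * Rpower (r ^ 2 - 1) (INR m - / 2)
       * (r - (Rabs r / r) * sqrt (r ^ 2 - 1)) ^ n).
Proof.
  destruct (joukowski_inv_spec r hr) as (Hrho & Hrho0 & Hr_rho & Hsign).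
  assert (Hr2 : 0 < r ^ 2 - 1) by (unfold Rabs in hr; destruct (Rcase_abs r); nra).
  assert (Hq : 0 < sqrt (r ^ 2 - 1)) by (apply sqrt_lt_R0; exact Hr2).
  fold (joukowski_inv r).
  replace (PI * _ * _ * _ * _) with (trig_integral r m n).
  - apply (is_RInt_gen_ext (fun s => trig_integrand r m n (acos s) / sqrt (1 - s ^ 2))).
    + generalize (filter_prod_at_right_at_left_inside (-1) 1 ltac:(lra)); apply filter_imp.
      intros ab Hab s Hs; apply trig_integrand_acos; [exact hr | apply Hab; lra].
    + apply is_RInt_gen_acos, continuous_trig_integrand, hr.
  - rewrite (trig_integral_closed_form r hr (joukowski_inv r)),
      (trig_integral_0_0 r hr (joukowski_inv r)) by assumption.
    rewrite Rpower_INR_sub_half, Hsign, pow_add by exact Hr2.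
    replace (1 - r * r) with (-1 * (r ^ 2 - 1)) by ring; rewrite Rpow_mult_distr.
    field; split; apply Rgt_not_eq; [lra | nra].
Qed.
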